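(* Let $N\ge1$, $M=2^N$, and let $\mathcal{A}=\{a_0,\dots,a_{M-1}\}\subset\mathbb{C}$ be a constellation with an arbitrary labelling (in particular, not necessarily a Gray labelling). Suppose there is a family of rectangles in $\mathbb{C}$, each having four points of $\mathcal{A}$ as its vertices, such that: (1) the vertices of these rectangles cover all points of $\mathcal{A}$; (2) no two rectangles share a vertex; (3) in each rectangle, the labels of the two points of one diagonal pair both contain an odd number of $0$s in their $N$-bit binary representations and the labels of the two points of the other diagonal pair both contain an even number of $0$s. Then for all $y,h\in\mathbb{C}$, with $d_i=|y-ha_i|^2$, the coefficient $\bar d_{\{0,\dots,N-1\}}$ of the monomial $\prod_{n=0}^{N-1}z_n$ in the associated pseudo-Boolean function $f$ is zero.
   Context: For $i\in\{0,\dots,M-1\}$ write its $N$-bit binary representation as $b_0(i)\cdots b_{N-1}(i)$ with $b_0$ the most significant bit; this bit string is the label of $a_i$. Given $d_0,\dots,d_{M-1}$, define $f(z_0,\dots,z_{N-1})=\sum_{i}d_i\prod_{n=0}^{N-1}B_{i,n}(z_n)$, $z_n\in\{0,1\}$, with $B_{i,n}(z)=z$ if $b_n(i)=1$ and $1-z$ if $b_n(i)=0$. Its multilinear expansion is $f=\sum_{S\subseteq\{0,\dots,N-1\}}\bar d_S\prod_{n\in S}z_n$ with $\bar d_S=\sum_{i:\,b_n(i)=0\ \forall n\notin S}d_i\prod_{n\in S}(-1)^{1-b_n(i)}$. *)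

(* Complex numbers: an arbitrary numClosedFieldType C
   (e.g. algC, or complex R over a real closed field). *)
From mathcomp Require Import all_boot all_order all_algebra.
Set Implicit Arguments. Unset Strict Implicit. Unset Printing Implicit Defensive.
Import Order.TTheory GRing.Theory Num.Theory.
Local Open Scope ring_scope.

(* b_n(i): bit n of the N-bit label of i, b_0 the most significant bit. *)
Definition bit (N : nat) (n : 'I_N) (i : nat) : bool := odd (i %/ 2 ^ (N.-1 - n)).

Definition nzeros (N : nat) (i : nat) : nat := #|[set n : 'I_N | ~~ bit n i]|.

Definition dbar (C : comNzRingType) (N : nat) (d : 'I_(2 ^ N) -> C) (S : {set 'I_N}) : C :=
  \sum_(i : 'I_(2 ^ N) | [forall n : 'I_N, (n \notin S) ==> ~~ bit n i])
     d i * \prod_(n in S) (-1) ^+ (1 - bit n i).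

(* p, q, r, s (in this cyclic order) are the vertices of a (non-degenerate)
   rectangle: a parallelogram with a right angle at p and non-zero sides.
   Its diagonals are {p, r} and {q, s}. *)
Definition is_rectangle (C : numClosedFieldType) (p q r s : C) : Prop :=
  q - p = r - s /\ 'Re ((q - p) * (s - p)^*) = 0 /\ q != p /\ s != p.

From mathcomp Require Import all_boot all_order all_algebra.
From mathcomp Require Import ring.

Set Implicit Arguments.
Unset Strict Implicit.
Unset Printing Implicit Defensive.
Import Order.TTheory GRing.Theory Num.Theory.
Local Open Scope ring_scope.

(* The top coefficient is the alternating sum of the d_i with sign
   (-1)^(number of zeros of i).  The rectangles split this sum into blocks
   +-(d_p - d_q + d_r - d_s), and each block vanishes by the British flag
   theorem |x - p|^2 + |x - r|^2 = |x - q|^2 + |x - s|^2, applied to x = y and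
   the rectangle h.pqrs. *)

Section Rectangle.

Variable C : numClosedFieldType.

Lemma Re_eq0_mul_conj (u v : C) : 'Re (u * v^*) = 0 -> u * v^* + u^* * v = 0.
Proof.
rewrite ReE => /eqP; rewrite mulf_eq0 invr_eq0 pnatr_eq0 orbF => /eqP.
by rewrite rmorphM /= conjCK.
Qed.

Lemma british_flag (p q r s x h : C) :
  q - p = r - s -> 'Re ((q - p) * (s - p)^*) = 0 ->
  `|x - h * p| ^+ 2 + `|x - h * r| ^+ 2 = `|x - h * q| ^+ 2 + `|x - h * s| ^+ 2.
Proof.
move=> pq_rs /Re_eq0_mul_conj right_angle.
have -> : r = q - p + s by rewrite pq_rs subrK.
apply/eqP; rewrite -subr_eq0 !normCK; apply/eqP.
transitivity (h * h^* * ((q - p) * (s - p)^* + (q - p)^* * (s - p))).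
  by rewrite !(rmorphB, rmorphD, rmorphM) /=; ring.
by rewrite right_angle mulr0.
Qed.

Lemma orthogonal_neq (u v : C) :
  u * v^* + u^* * v = 0 -> u != 0 -> (v != u) && (v != - u).
Proof.
move=> orth u_neq0.
have uu_neq0 : u * u^* *+ 2 != 0.
  by rewrite mulrn_eq0 /= -normCK sqrf_eq0 normr_eq0.
apply/andP; split; apply: contra uu_neq0 => /eqP v_def.
  by rewrite -orth v_def mulr2n mulrC.
by rewrite -oppr_eq0 -orth v_def rmorphN; apply/eqP; ring.
Qed.

Lemma rectangle_uniq (p q r s : C) : is_rectangle p q r s -> uniq [:: p; q; r; s].
Proof.
move=> [pq_rs [/Re_eq0_mul_conj right_angle [qp sp]]].
have /andP[sp_neq_qp sp_neq_pq] : (s - p != q - p) && (s - p != - (q - p)).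
  by apply: orthogonal_neq; rewrite // subr_eq0.
have r_def : r = q - p + s by rewrite pq_rs subrK.
have pr : p != r.
  by rewrite eq_sym -subr_eq0 (_ : r - p = s - p + (q - p)) ?addr_eq0 // r_def; ring.
have qr : q != r.
  by rewrite eq_sym -subr_eq0 (_ : r - q = s - p) ?subr_eq0 // r_def; ring.
have qs : q != s by apply: contraNneq sp_neq_qp => ->.
have rs : r != s by rewrite -subr_eq0 -pq_rs subr_eq0.
by rewrite /= !inE !negb_or eq_sym qp pr eq_sym sp qr qs rs.
Qed.

End Rectangle.

Lemma dbar_setT (C : comNzRingType) (N : nat) (d : 'I_(2 ^ N) -> C) :
  dbar d [set: 'I_N] = \sum_i d i * (-1) ^+ nzeros N i.
Proof.
rewrite /dbar (eq_bigl xpredT) => [|i]; last by apply/forallP => n; rewrite in_setT.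
apply: eq_bigr => i _; congr (_ * _).
rewrite (eq_bigr (fun n => if ~~ bit n i then -1 else 1)); last by move=> n; case: bit.
rewrite -big_mkcondr prodr_const /nzeros; congr (_ ^+ _).
by rewrite cardsE; apply: eq_card => n; rewrite -!topredE /= in_setT.
Qed.

Lemma sum_over_partition (R : nmodType) (I J : finType) (B : J -> seq I) (F : I -> R) :
  (forall i, exists k, i \in B k) ->
  (forall k l, k != l -> forall i, i \in B k -> i \notin B l) ->
  (forall k, uniq (B k)) ->
  \sum_i F i = \sum_k \sum_(i <- B k) F i.
Proof.
move=> cover disj B_uniq.
transitivity (\sum_i \sum_k (if i \in B k then F i else 0)).
  apply: eq_bigr => i _; have [k ik] := cover i.
  rewrite (bigD1 k) //= ik big1 ?addr0 // => l lk.
  by rewrite (negbTE (disj k l _ i ik)) // eq_sym.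
rewrite exchange_big; apply: eq_bigr => k _.
by rewrite -big_mkcond /= -big_uniq.
Qed.

Lemma alternating_sum_eq0 (R : comPzRingType) (dp dq dr ds : R) (np nq nr ns : nat) :
  (odd np && odd nr && ~~ odd nq && ~~ odd ns)
    || (~~ odd np && ~~ odd nr && odd nq && odd ns) ->
  dp + dr = dq + ds ->
  dp * (-1) ^+ np + dq * (-1) ^+ nq + dr * (-1) ^+ nr + ds * (-1) ^+ ns = 0.
Proof.
move=> parity flag; have -> : dp = dq + ds - dr by rewrite -flag addrK.
rewrite -(signr_odd _ np) -(signr_odd _ nq) -(signr_odd _ nr) -(signr_odd _ ns).
by case: (odd np) (odd nq) (odd nr) (odd ns) parity => [] [] [] [] //= _; ring.
Qed.

Theorem corollary1 (C : numClosedFieldType) (N : nat) (hN : (1 <= N)%N)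
    (a : 'I_(2 ^ N) -> C) (ha : injective a)
    (K : nat) (p q r s : 'I_K -> 'I_(2 ^ N))
    (hrect : forall k, is_rectangle (a (p k)) (a (q k)) (a (r k)) (a (s k)))
    (hcover : forall j : 'I_(2 ^ N), exists k, j \in [:: p k; q k; r k; s k])
    (hdisj : forall k l, k != l -> forall j : 'I_(2 ^ N),
        j \in [:: p k; q k; r k; s k] -> j \notin [:: p l; q l; r l; s l])
    (hpar : forall k,
        (odd (nzeros N (p k)) && odd (nzeros N (r k))
          && ~~ odd (nzeros N (q k)) && ~~ odd (nzeros N (s k)))
        || (~~ odd (nzeros N (p k)) && ~~ odd (nzeros N (r k))
          && odd (nzeros N (q k)) && odd (nzeros N (s k))))
    (y h : C) :
  dbar (fun i => `|y - h * a i| ^+ 2) [set: 'I_N] = 0.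
Proof.
have blocks_uniq k : uniq [:: p k; q k; r k; s k].
  by apply: (@map_uniq _ _ a); apply: rectangle_uniq.
rewrite dbar_setT (sum_over_partition _ hcover hdisj blocks_uniq).
rewrite big1 // => k _.
have [pq_rs [right_angle _]] := hrect k.
rewrite !big_cons big_nil addr0 !addrA.
exact: alternating_sum_eq0 (hpar k) (british_flag _ _ pq_rs right_angle).
Qed.
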